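(* Let $Q$ be a finite connected quandle whose elements are labelled $1,2,\dots,n$, and assume the labelling satisfies: $\{j \in Q : R_j = R_1\} = \{1,2,\dots,s\}$, and for distinct $i,j \in \{1,\dots,s\}$ the pairs $(1,i)$ and $(1,j)$ lie in different orbits of the diagonal action of $\mathrm{Inn}(Q)$ on $Q\times Q$. For any oriented knot $K$, let $T$ be a $1$-tangle whose closure is $K$, and let $rm(T)$ be its reversed mirror image (a $1$-tangle whose closure is $rm(K)$). Then there exists a permutation $p$ of $\{1,\dots,s\}$ with $p\circ p=\mathrm{id}$ such that $$\Psi^1_Q(rm(K)) = \big(\mathrm{Col}^{1,p(1)}_Q(T),\mathrm{Col}^{1,p(2)}_Q(T),\dots,\mathrm{Col}^{1,p(s)}_Q(T)\big),$$ where $\Psi^1_Q(K') := (\mathrm{Col}^{1,1}_Q(T'),\dots,\mathrm{Col}^{1,s}_Q(T'))$ for a $1$-tangle $T'$ with closure $K'$.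
   Context: A quandle is a set $Q$ with a binary operation $*$ such that $a*a=a$ for all $a$; for all $b,c$ there is a unique $a$ with $a*b=c$; and $(a*b)*c=(a*c)*(b*c)$ for all $a,b,c$. The right translation $R_a:Q\to Q$ is $R_a(x)=x*a$; it is an automorphism. $\mathrm{Inn}(Q)$ is the subgroup of the symmetric group on $Q$ generated by all $R_a$; $Q$ is connected if $\mathrm{Inn}(Q)$ acts transitively on $Q$. $\mathrm{Inn}(Q)$ acts on $Q\times Q$ by $g(a,b)=(g(a),g(b))$. All knots are oriented; $r(K)$ is $K$ with reversed orientation, $m(K)$ its mirror image, $rm=r\circ m$. A $1$-tangle is a properly embedded oriented arc in a $3$-ball, considered up to isotopy fixing the boundary; diagrams are drawn oriented from top to bottom, with top arc $b_0$ and bottom arc $b_1$; its closure is the knot obtained by joining the endpoints by a trivial arc outside the disk (isotopy classes of knots and of $1$-tangles correspond bijectively). A coloring of a diagram by $Q$ is a map from the set of arcs to $Q$ such that at every crossing, if the over-arc has color $y$ and the incoming under-arc (with the standard sign convention) has color $x$, the other under-arc has color $x*y$; the end arcs of a $1$-tangle need not receive the same color. For $a,b\in Q$, $\mathrm{Col}^{a,b}_Q(T)$ denotes the number of colorings $C$ of $T$ by $Q$ with $C(b_0)=a$, $C(b_1)=b$; it is a knot invariant of the closure. *)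

From HB Require Import structures.
From mathcomp Require Import all_boot all_fingroup.
Set Implicit Arguments. Unset Strict Implicit. Unset Printing Implicit Defensive.

Section Quandle.
Variables (Q : finType) (op : Q -> Q -> Q).

Definition is_quandle : Prop :=
  [/\ (forall a, op a a = a),
      (forall b c, exists! a, op a b = c) &
      (forall a b c, op (op a b) c = op (op a c) (op b c))].

(* right translation R_a as a permutation of Q (it is one whenever op is a
   quandle operation; the default 1 is never used for quandles) *)
Definition Rperm (a : Q) : {perm Q} := insubd (1%g : {perm Q}) [ffun x => op x a].

Definition Inn : {group {perm Q}} := <<[set Rperm a | a in Q]>>%G.

Definition connected : Prop := forall a b : Q, exists2 g, g \in Inn & g a = b.

Definition same_orbit2 (x y : Q * Q) : Prop :=
  exists2 g, g \in Inn & (g x.1, g x.2) = y.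
End Quandle.

(* ---------- oriented 1-tangle diagrams ----------
   A diagram with m crossings is traversed from top to bottom.  It passes under
   the crossings 0,...,m-1 in this order; the arcs are 0,...,m, arc k being the
   piece between the (k-1)-th and k-th under-passage, so b_0 = arc 0 and
   b_1 = arc m.  At the k-th under-passage the incoming under-arc is arc k, the
   outgoing under-arc is arc k+1, the over-arc is [ov k], and [sg k] is the
   sign of the crossing (true = positive). *)
Record tangle := Tangle {
  ncr : nat;
  ov : {ffun 'I_ncr -> 'I_ncr.+1};
  sg : {ffun 'I_ncr -> bool}
}.

Definition arc_in (m : nat) (k : 'I_m) : 'I_m.+1 := widen_ord (leqnSn m) k.
Definition arc_out (m : nat) (k : 'I_m) : 'I_m.+1 := lift ord0 k.

Definition is_coloring (Q : finType) (op : Q -> Q -> Q) (T : tangle)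
  (c : {ffun 'I_(ncr T).+1 -> Q}) : bool :=
  [forall k : 'I_(ncr T),
     if sg T k then c (arc_out k) == op (c (arc_in k)) (c (ov T k))
     else c (arc_in k) == op (c (arc_out k)) (c (ov T k))].
Arguments is_coloring : clear implicits.

Definition Col (Q : finType) (op : Q -> Q -> Q) (a b : Q) (T : tangle) : nat :=
  #|[set c : {ffun 'I_(ncr T).+1 -> Q} |
      [&& @is_coloring Q op T c, c ord0 == a & c ord_max == b]]|.

(* reversed mirror image rm(T): reverse the orientation (then redraw from top to
   bottom, so the traversal order of crossings and arcs is reversed) and change
   every crossing (mirror), which flips all signs. *)
Definition rm (T : tangle) : tangle :=
  @Tangle (ncr T) [ffun k => rev_ord (ov T (rev_ord k))]
                  [ffun k => ~~ sg T (rev_ord k)].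

(* Reading a coloring of T backwards gives a coloring of rm(T): reversing the
   orientation and mirroring each crossing flips the sign twice, so the coloring
   rule is unchanged, and the end colors are swapped.  Hence Col^{1,i}(rm T) =
   Col^{i,1}(T).  Inner automorphisms preserve colorings, so moving i to 1 by
   some g in Inn(Q) gives Col^{i,1}(T) = Col^{1,g(1)}(T).  The value p(i) = g(1)
   does not depend on g, since two choices would put (1,g(1)) and (1,g'(1)) in
   one orbit; it lies in {1,...,s} because R_{g(1)} = g R_1 g^-1 = R_{g(i)} = R_1;
   and g^-1 moves p(i) to 1 and 1 to i, so p(p(i)) = i. *)

From mathcomp Require Import all_boot all_fingroup.
Set Implicit Arguments. Unset Strict Implicit. Unset Printing Implicit Defensive.

Definition rev_ffun (T : Type) (m : nat) (c : {ffun 'I_m -> T}) : {ffun 'I_m -> T} :=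
  [ffun k => c (rev_ord k)].

Lemma rev_ffunK (T : Type) (m : nat) : involutive (@rev_ffun T m).
Proof. by move=> c; apply/ffunP=> k; rewrite !ffunE rev_ordK. Qed.

Lemma rev_arc_out (m : nat) (k : 'I_m) : rev_ord (arc_out k) = arc_in (rev_ord k).
Proof. by apply/val_inj; rewrite /= /bump /= add1n subSS. Qed.

Lemma rev_arc_in (m : nat) (k : 'I_m) : rev_ord (arc_in k) = arc_out (rev_ord k).
Proof. by apply/val_inj; rewrite /= /bump /= add1n subSS subnSK. Qed.

Lemma rev_ord0 (m : nat) : rev_ord (@ord0 m) = ord_max.
Proof. by apply/val_inj; rewrite /= subn1. Qed.

Lemma rev_ord_max (m : nat) : rev_ord (@ord_max m) = ord0.
Proof. by apply/val_inj; rewrite /= subnn. Qed.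

Section Colorings.
Variables (Q : finType) (op : Q -> Q -> Q).

Lemma is_coloring_rm (T : tangle) (c : {ffun 'I_(ncr T).+1 -> Q}) :
  is_coloring Q op (rm T) c = is_coloring Q op T (rev_ffun c).
Proof.
apply/forallP/forallP=> Hc k.
- have := Hc (rev_ord k); rewrite /= !ffunE rev_ordK rev_arc_out rev_arc_in.
  by case: (sg T k).
- have := Hc (rev_ord k); rewrite /= !ffunE rev_arc_out rev_arc_in.
  by rewrite rev_ordK; case: (sg T (rev_ord k)).
Qed.

Lemma Col_rm (a b : Q) (T : tangle) : Col op a b (rm T) = Col op b a T.
Proof.
rewrite /Col -(card_preimset _ (inv_inj (@rev_ffunK Q (ncr T).+1))).
apply: eq_card=> c; rewrite !inE is_coloring_rm !ffunE rev_ord0 rev_ord_max.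
by rewrite [(_ == a) && _]andbC.
Qed.

Lemma Col_morph (g : Q -> Q) (a b : Q) (T : tangle) :
  injective g -> {morph g : x y / op x y} -> Col op (g a) (g b) T = Col op a b T.
Proof.
move=> g_inj g_morph.
pose gc (c : {ffun 'I_(ncr T).+1 -> Q}) := [ffun k => g (c k)].
have gc_inj : injective gc.
  by move=> c1 c2 /ffunP e; apply/ffunP=> k; have := e k; rewrite !ffunE => /g_inj.
rewrite /Col -(card_preimset _ gc_inj); apply: eq_card=> c.
rewrite !inE !ffunE !(inj_eq g_inj); congr (_ && _).
apply: eq_forallb=> k; rewrite !ffunE -!g_morph !(inj_eq g_inj).
by case: (sg T k).
Qed.

End Colorings.

Section QuandleAutomorphisms.
Variables (Q : finType) (op : Q -> Q -> Q).
Hypothesis op_quandle : is_quandle op.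

Lemma RpermE (a x : Q) : Rperm op a x = op x a.
Proof.
rewrite -pvalE /Rperm insubdK ?ffunE //; apply/injectiveP=> x1 x2; rewrite !ffunE.
case: op_quandle => _ op_divr _ e; case: (op_divr a (op x1 a)) => z [_ z_uniq].
by rewrite -(z_uniq x1 erefl) -(z_uniq x2 (esym e)).
Qed.

Definition quandle_auts : {set {perm Q}} :=
  [set g : {perm Q} | [forall x, forall y, g (op x y) == op (g x) (g y)]].

Lemma quandle_autsP (g : {perm Q}) :
  reflect {morph g : x y / op x y} (g \in quandle_auts).
Proof.
apply: (iffP idP); rewrite inE.
- by move=> /forallP g_morph x y; apply/eqP; have /forallP := g_morph x; apply.
- by move=> g_morph; apply/forallP=> x; apply/forallP=> y; rewrite g_morph.
Qed.

Lemma group_set_quandle_auts : group_set quandle_auts.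
Proof.
apply/group_setP; split; first by apply/quandle_autsP=> x y; rewrite !perm1.
move=> g h /quandle_autsP g_morph /quandle_autsP h_morph.
by apply/quandle_autsP=> x y; rewrite !permM g_morph h_morph.
Qed.

Canonical quandle_auts_group := Group group_set_quandle_auts.

Lemma Inn_morph (g : {perm Q}) : g \in Inn op -> {morph g : x y / op x y}.
Proof.
move=> gI; apply/quandle_autsP; move: g gI; apply/subsetP.
rewrite -[quandle_auts]/(gval quandle_auts_group) gen_subG.
apply/subsetP=> _ /imsetP[a _ ->]; apply/quandle_autsP=> x y.
by rewrite !RpermE; case: op_quandle => _ _ ->.
Qed.

Lemma Col_Inn (g : {perm Q}) (a b : Q) (T : tangle) :
  g \in Inn op -> Col op (g a) (g b) T = Col op a b T.
Proof. by move=> gI; apply: Col_morph; [apply: perm_inj | apply: Inn_morph]. Qed.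

Lemma Rperm_Inn (g : {perm Q}) (a : Q) :
  g \in Inn op -> Rperm op (g a) = (g^-1 * Rperm op a * g)%g.
Proof.
move=> gI; apply/permP=> y.
by rewrite !permM !RpermE -{1}(permKV g y) -Inn_morph.
Qed.

End QuandleAutomorphisms.

Lemma restrict_involution (n s : nat) (f : 'I_n.+1 -> 'I_n.+1) :
  s <= n.+1 -> {homo f : x / x < s} -> {in [pred x : 'I_n.+1 | x < s], involutive f} ->
  exists p : {perm 'I_s}, (p * p = 1)%g /\ forall i : 'I_s, inord (p i) = f (inord i).
Proof.
move=> le_sn f_lt fK.
have inordE (i : 'I_s) : (inord i : 'I_n.+1) = i :> nat.
  by rewrite inordK // (leq_trans (ltn_ord i)).
pose g (i : 'I_s) : 'I_s := insubd i (val (f (inord i))).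
have gE i : g i = f (inord i) :> nat by rewrite val_insubd f_lt ?inordE.
have gK : involutive g.
  move=> i; apply/val_inj; rewrite /= gE.
  have -> : inord (g i) = f (inord i) by apply/val_inj; rewrite /= inordE gE.
  by rewrite fK ?inE inordE.
exists (perm (inv_inj gK)); split.
  by apply/permP=> i; rewrite permM perm1 !permE gK.
by move=> i; apply/val_inj; rewrite /= permE inordE gE.
Qed.

Section ConnectedQuandle.
Variables (n s : nat) (op : 'I_n.+1 -> 'I_n.+1 -> 'I_n.+1).
Hypothesis op_quandle : is_quandle op.
Hypothesis op_connected : connected op.
Hypothesis Rperm_eq0 : forall j : 'I_n.+1, Rperm op j = Rperm op ord0 <-> j < s.
Hypothesis orbits_separated : forall i j : 'I_n.+1, i < s -> j < s -> i != j ->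
  ~ same_orbit2 op (ord0, i) (ord0, j).

Definition transporter (x : 'I_n.+1) : {perm 'I_n.+1} :=
  odflt 1%g [pick g in Inn op | g x == ord0].

Lemma transporterP (x : 'I_n.+1) : transporter x \in Inn op /\ transporter x x = ord0.
Proof.
rewrite /transporter; case: pickP => [g /andP[gI /eqP ->] // | no_g].
by case: (op_connected x ord0) => g gI gx; have := no_g g; rewrite gI gx eqxx.
Qed.

Definition partner (x : 'I_n.+1) : 'I_n.+1 := transporter x ord0.

Lemma Inn_to0_lt (g : {perm 'I_n.+1}) (x : 'I_n.+1) :
  g \in Inn op -> x < s -> g x = ord0 -> g ord0 < s.
Proof.
move=> gI xs gx; apply/Rperm_eq0.
rewrite (Rperm_Inn op_quandle) // -{1}(proj2 (Rperm_eq0 x) xs).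
by rewrite -(Rperm_Inn op_quandle) // gx.
Qed.

Lemma Inn_to0_uniq (g h : {perm 'I_n.+1}) (x : 'I_n.+1) :
  g \in Inn op -> h \in Inn op -> x < s -> g x = ord0 -> h x = ord0 ->
  g ord0 = h ord0.
Proof.
move=> gI hI xs gx hx; apply/eqP/negPn/negP => ne.
apply: (orbits_separated (Inn_to0_lt gI xs gx) (Inn_to0_lt hI xs hx) ne).
exists (g^-1 * h)%g; first by rewrite groupM ?groupV.
by rewrite /= !permM -{1}gx permK hx permK.
Qed.

Lemma partner_lt : {homo partner : x / x < s}.
Proof. by move=> x xs; have [gI gx] := transporterP x; apply: Inn_to0_lt gx. Qed.

Lemma partnerK : {in [pred x : 'I_n.+1 | x < s], involutive partner}.
Proof.
move=> x xs; have [gI gx] := transporterP x; have [hI hx] := transporterP (partner x).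
have gVI : ((transporter x)^-1)%g \in Inn op by rewrite groupV.
rewrite [LHS](Inn_to0_uniq hI gVI (partner_lt xs) hx (permK _ _)).
by rewrite -{1}gx permK.
Qed.

Lemma Col_rm_partner (x : 'I_n.+1) (T : tangle) :
  Col op ord0 x (rm T) = Col op ord0 (partner x) T.
Proof.
have [gI gx] := transporterP x.
by rewrite Col_rm -(Col_Inn op_quandle _ _ _ gI) gx.
Qed.

End ConnectedQuandle.

Theorem mainTheorem1 (n s : nat) (op : 'I_n.+1 -> 'I_n.+1 -> 'I_n.+1)
  (Hq : is_quandle op) (Hconn : connected op)
  (Hsn : s <= n.+1)
  (Hs : forall j : 'I_n.+1, Rperm op j = Rperm op ord0 <-> j < s)
  (Horb : forall i j : 'I_n.+1, i < s -> j < s -> i != j ->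
            ~ same_orbit2 op (ord0, i) (ord0, j))
  (T : tangle) :
  exists p : {perm 'I_s},
    (p * p = 1)%g /\
    forall i : 'I_s,
      Col op ord0 (inord i) (rm T) = Col op ord0 (inord (p i)) T.
Proof.
have [p [pK pE]] := restrict_involution Hsn (partner_lt Hq Hconn Hs)
  (partnerK Hq Hconn Hs Horb).
by exists p; split=> // i; rewrite pE Col_rm_partner.
Qed.
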